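(* Consider an urn containing $N$ balls, $M \ge \frac{N}{2}$ of which are white while the others are black. The balls are drawn from the urn one by one uniformly at random without replacement until the urn is empty. Let $\ell$ be an integer with $8\log N \le \ell \le \frac{M}{432}$. If $M \ge 64$, then the probability that there exists some contiguous subsequence of at least $54\ell$ drawn balls containing $\ell$ or fewer white balls is at most $N^{-6}$.
   Context: $\log$ denotes the binary logarithm. *)

From HB Require Import structures.
From mathcomp Require Import all_boot all_order all_algebra all_fingroup.
From mathcomp Require Import all_classical all_reals exp.
Set Implicit Arguments. Unset Strict Implicit. Unset Printing Implicit Defensive.
Import Order.TTheory GRing.Theory Num.Theory.
Local Open Scope ring_scope.

Definition log2 {R : realType} (x : R) : R := ln x / ln 2.

(* Balls are labelled by 'I_N; ball b is white iff b < M (so there are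
   exactly M white balls when M <= N).  A complete drawing order is a
   permutation s : {perm 'I_N}, s j being the ball drawn at step j;
   uniform drawing without replacement = uniform permutation. *)

Definition whites_in (N M : nat) (s : {perm 'I_N}) (i k : nat) : nat :=
  #|[set j : 'I_N | (i <= j < i + k)%N && (s j < M)%N]|.

Definition bad_draw (N M l : nat) (s : {perm 'I_N}) : bool :=
  [exists i : 'I_N.+1, exists k : 'I_N.+1,
     [&& (54 * l <= k)%N, (i + k <= N)%N & (whites_in M s i k <= l)%N]].

Definition prob_bad (R : realType) (N M l : nat) : R :=
  #|[set s : {perm 'I_N} | bad_draw M l s]|%:R / #|{perm 'I_N}|%:R.

From mathcomp Require Import all_boot all_algebra all_fingroup.
From mathcomp Require Import reals exp.
From mathcomp Require Import zify.

Set Implicit Arguments.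
Unset Strict Implicit.
Unset Printing Implicit Defensive.

Import GRing.Theory Num.Theory.

(* Since at least half of the balls are white, every black ball b can be paired
   with the white ball b - M.  Swapping the balls drawn at any subset V of a set
   S of positions with their partners is injective in (drawing order, V) on the
   orders that draw only black balls at S, so S is all black with probability
   at most 2^-|S|.  Summing over the subsets of a window W of draws, this gives
   E[3^B] <= 2^|W| for the number B of black balls drawn in W, hence a window of
   54 l draws holds at least 53 l black balls with probability at most
   2^(54 l) / 3^(53 l).  A union bound over the N + 1 window positions together
   with N^8 <= 2^l, which is the hypothesis l >= 8 log N, concludes. *)

Section Recolouring.

Variables N M : nat.
Hypothesis N_le_2M : N <= 2 * M.

Definition black_pos (s : {perm 'I_N}) : {set 'I_N} := [set j | M <= s j].

(* White balls x >= N - M have no partner and are fixed. *)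
Definition partner (x : 'I_N) : 'I_N :=
  if M <= x then insubd x (x - M) else insubd x (x + M).

Lemma val_partner x : val (partner x) =
  if M <= x then x - M else if x + M < N then x + M else x.
Proof.
rewrite /partner; case: ifP => M_le_x; rewrite val_insubd //.
by rewrite (leq_ltn_trans (leq_subr _ _) (ltn_ord x)).
Qed.

Lemma partnerK : involutive partner.
Proof.
move=> x; apply: val_inj; rewrite !val_partner; have := ltn_ord x.
case: (leqP M x) => [M_le_x|x_lt_M] x_lt_N.
  have -> : (M <= x - M) = false by apply/negbTE; rewrite -ltnNge; lia.
  have -> : x - M + M < N by lia.
  by rewrite subnK.
case: (ltnP (x + M) N) => xM_N; first by rewrite leq_addl addnK.
by rewrite ltnNge xM_N /= leqNgt x_lt_M.
Qed.

Lemma partner_white (x : 'I_N) : M <= x -> partner x < M.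
Proof. by move=> M_le_x; rewrite val_partner M_le_x; have := ltn_ord x; lia. Qed.

Definition swap_with_partner (C : {set 'I_N}) x :=
  if (x \in C) || (partner x \in C) then partner x else x.

Lemma swap_with_partnerK C : involutive (swap_with_partner C).
Proof.
move=> x; rewrite {2}/swap_with_partner.
case: ifP => [x_C|]; last by rewrite /swap_with_partner => ->.
by rewrite /swap_with_partner partnerK orbC x_C.
Qed.

Definition swap_partners C : {perm 'I_N} := perm (inv_inj (swap_with_partnerK C)).

Definition whiten (s : {perm 'I_N}) (V : {set 'I_N}) : {perm 'I_N} :=
  (s * swap_partners (s @: V))%g.

Lemma whitenE s (V : {set 'I_N}) j : j \in V -> whiten s V j = partner (s j).
Proof. by move=> j_V; rewrite permM permE /swap_with_partner imset_f. Qed.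

Lemma whiten_white s (S V : {set 'I_N}) j :
  S \subset black_pos s -> V \subset S -> j \in S -> (whiten s V j < M) = (j \in V).
Proof.
move=> /subsetP S_black V_S j_S; have /[!inE] sj_black := S_black j j_S.
have [j_V|j_V] := boolP (j \in V); first by rewrite whitenE // partner_white.
rewrite permM permE /swap_with_partner mem_imset ?(negbTE j_V) /=; last first.
  exact: perm_inj.
case: imsetP => [[k k_V sk] | _]; last by rewrite ltnNge sj_black.
have /[!inE] := S_black k (subsetP V_S k k_V).
by rewrite -sk; have := partner_white sj_black; lia.
Qed.

Lemma whiten_imset (s : {perm 'I_N}) (V : {set 'I_N}) :
  s @: V = partner @: (whiten s V @: V).
Proof.
rewrite -imset_comp -[LHS](eq_imset _ (fun j => partnerK (s j))) /=.
by apply: eq_in_imset => j j_V /=; rewrite whitenE.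
Qed.

Lemma whiten_inj (S : {set 'I_N}) :
  {in setX [set s | S \subset black_pos s] (powerset S) &,
    injective (fun p => whiten p.1 p.2)}.
Proof.
move=> [s1 V1] [s2 V2] /setXP[+ +] /setXP[+ +] /=.
rewrite !inE => S_b1 V1_S S_b2 V2_S eq_w.
have eqV : V1 = V2.
  apply/setP => j; have [j_S|j_S] := boolP (j \in S).
    by rewrite -(whiten_white S_b1 V1_S j_S) -(whiten_white S_b2 V2_S j_S) eq_w.
  by rewrite (contraNF (subsetP V1_S j)) ?(contraNF (subsetP V2_S j)).
subst V2; have eq_img : s1 @: V1 = s2 @: V1 by rewrite whiten_imset eq_w -whiten_imset.
by move: eq_w; rewrite /whiten eq_img => /mulIg ->.
Qed.

Lemma card_all_black (S : {set 'I_N}) :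
  #|[set s | S \subset black_pos s]| * 2 ^ #|S| <= #|{perm 'I_N}|.
Proof.
rewrite -card_powerset -cardsX -(card_in_imset (@whiten_inj S)).
exact: max_card.
Qed.

End Recolouring.

Lemma sum_subset_exp2 (T : finType) (A : {set T}) :
  \sum_(S : {set T} | S \subset A) 2 ^ #|S| = 3 ^ #|A|.
Proof.
pose F i := if i \in A then 2 else 0.
have := @bigA_distr nat 0 1 muln addn T F (fun=> 1).
rewrite (bigID (mem A)) /= [X in _ * X]big1 => [|i /negbTE]; last by rewrite /F => ->.
rewrite muln1 (eq_bigr (fun=> 3)) => [|i]; last by rewrite /F => ->.
rewrite prod_nat_const => ->; rewrite big_mkcond /=; apply: eq_bigr => S _.
rewrite -big_mkcond /=; case: ifPn => [/subsetP S_A | /subsetPn[i i_S i_A]].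
  by rewrite -prod_nat_const; apply: eq_bigr => i /S_A; rewrite /F => ->.
by rewrite (bigD1 i) //= /F (negbTE i_A).
Qed.

Definition window N i L : {set 'I_N} := [set j : 'I_N | i <= j < i + L].

Lemma card_window N i L : i + L <= N -> #|window N i L| = L.
Proof.
move=> iL_N; rewrite -sum1dep_card -(big_mkord (fun j => i <= j < i + L) (fun=> 1)).
transitivity (\sum_(i <= j < i + L) 1); last by rewrite sum_nat_const_nat muln1 addKn.
by rewrite (big_nat_widenl _ 0 _ predT) // (big_nat_widen _ _ _ _ _ iL_N).
Qed.

Lemma card_many_black N M (W : {set 'I_N}) m : N <= 2 * M ->
  #|[set s : {perm 'I_N} | m <= #|W :&: black_pos M s|]| * 3 ^ m
    <= 2 ^ #|W| * #|{perm 'I_N}|.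
Proof.
move=> N_le_2M; rewrite -sum_nat_cond_const.
apply: (@leq_trans (\sum_s 3 ^ #|W :&: black_pos M s|)).
  rewrite big_mkcond /=; apply: leq_sum => s _.
  by case: ifP => // m_le; apply: leq_pexp2l.
under eq_bigr do rewrite -sum_subset_exp2.
rewrite (exchange_big_dep (fun S : {set 'I_N} => S \subset W)) => [|s S _]; last first.
  by rewrite subsetI => /andP[].
rewrite -card_powerset /powerset -sum_nat_cond_const leq_sum // => S _.
rewrite sum_nat_cond_const; apply: leq_trans (card_all_black N_le_2M S).
rewrite leq_mul2r subset_leq_card ?orbT //.
by apply/subsetP => s; rewrite !inE subsetI => /and3P[_ _ ->].
Qed.

Lemma leq_card_bigcup (I T : finType) (P : pred I) (A : I -> {set T}) :
  #|\bigcup_(i | P i) A i| <= \sum_(i | P i) #|A i|.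
Proof.
elim/big_rec2: _ => [|i n B _ le_Bn]; first by rewrite cards0.
by rewrite (leq_trans (leq_card_setU _ _)) // leq_add2l.
Qed.

Lemma bad_draw_black_window N M l (s : {perm 'I_N}) : bad_draw M l s ->
  exists2 i : 'I_N.+1, i + 54 * l <= N &
    53 * l <= #|window N i (54 * l) :&: black_pos M s|.
Proof.
case/existsP => i /existsP[k /and3P[L_le_k ik_N whites_le]].
have iL_N : i + 54 * l <= N by lia.
exists i => //; have := cardsID (black_pos M s) (window N i (54 * l)).
rewrite card_window //; suff : #|window N i (54 * l) :\: black_pos M s| <= l by lia.
apply: leq_trans whites_le; apply/subset_leq_card/subsetP => j.
rewrite !inE -ltnNge => /andP[-> /andP[-> j_lt]]; lia.
Qed.

Lemma card_bad_draw N M l : N <= 2 * M ->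
  #|[set s : {perm 'I_N} | bad_draw M l s]| * 3 ^ (53 * l)
    <= N.+1 * (2 ^ (54 * l) * #|{perm 'I_N}|).
Proof.
move=> N_le_2M; set L := 54 * l.
pose many_black i := [set s : {perm 'I_N} | 53 * l <= #|window N i L :&: black_pos M s|].
have bad_sub :
    [set s | bad_draw M l s] \subset \bigcup_(i : 'I_N.+1 | i + L <= N) many_black i.
  apply/subsetP => s; rewrite inE => /bad_draw_black_window[i iL_N black_i].
  by apply/bigcupP; exists i; rewrite ?inE.
apply: leq_trans (leq_mul (subset_leq_card bad_sub) (leqnn _)) _.
apply: leq_trans (leq_mul (leq_card_bigcup _ _) (leqnn _)) _.
rewrite big_distrl /=.
apply: (@leq_trans (\sum_(i : 'I_N.+1 | i + L <= N) 2 ^ L * #|{perm 'I_N}|)).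
  apply: leq_sum => i iL_N.
  by have := card_many_black (window N i L) (53 * l) N_le_2M; rewrite card_window.
by rewrite sum_nat_cond_const leq_mul2r -[leqRHS]card_ord max_card orbT.
Qed.

Lemma exp2_55_le_exp3_53 l : 2 ^ (55 * l) <= 3 ^ (53 * l).
Proof.
have [->|l_gt0] := posnP l; first by rewrite !muln0.
apply: (@leq_trans (2 ^ (3 * (19 * l)))); first by apply: leq_pexp2l; lia.
apply: (@leq_trans (3 ^ (2 * (19 * l)))); last by apply: leq_pexp2l; lia.
by rewrite (expnM 2 3) (expnM 3 2) leq_exp2r ?muln_gt0.
Qed.

Lemma card_bad_draw_mul_expn N M l : N <= 2 * M -> 1 < N -> N ^ 8 <= 2 ^ l ->
  #|[set s : {perm 'I_N} | bad_draw M l s]| * N ^ 6 <= #|{perm 'I_N}|.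
Proof.
move=> N_le_2M N_gt1 N8_le.
have N6_le : N.+1 * N ^ 6 <= 2 ^ l.
  apply: leq_trans N8_le; rewrite (expnS N 7) (expnS N 6) mulnA leq_mul2r; nia.
rewrite -(@leq_pmul2r (3 ^ (53 * l))) ?expn_gt0 // mulnAC.
apply: leq_trans (leq_mul (card_bad_draw l N_le_2M) (leqnn (N ^ 6))) _.
apply: (@leq_trans (2 ^ (55 * l) * #|{perm 'I_N}|)); last first.
  by rewrite mulnC leq_mul2l exp2_55_le_exp3_53 orbT.
rewrite (mulSn 54 l) expnD.
apply: leq_trans (leq_mul (leq_mul N6_le (leqnn (2 ^ (54 * l)))) (leqnn _)).
by apply/eq_leq; lia.
Qed.

Local Open Scope ring_scope.

Lemma expn_le_exp2_of_log2 (R : realType) n k l : (0 < n)%N ->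
  k%:R * log2 (n%:R : R) <= l%:R -> (n ^ k <= 2 ^ l)%N.
Proof.
move=> n_gt0; rewrite /log2 mulrA ler_pdivrMr; last by rewrite ln_gt0 // ltr1n.
move=> log_le; rewrite -(@ler_nat R) !natrX -ler_ln ?posrE ?exprn_gt0 ?ltr0n //.
by rewrite !lnXn ?ltr0n // -[ln n%:R *+ k]mulr_natl -[ln 2 *+ l]mulr_natl.
Qed.

Theorem lemma3p2 (R : realType) (N M l : nat) :
  (M <= N)%N ->
  (N%:R / 2 <= (M%:R : R)) ->
  8 * log2 (N%:R : R) <= l%:R ->
  (l%:R : R) <= M%:R / 432 ->
  (64 <= M)%N ->
  prob_bad R N M l <= (N%:R : R) ^- 6.
Proof.
move=> M_le_N N_le_2M log_le _ M_ge64.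
have {}N_le_2M : (N <= 2 * M)%N.
  by move: N_le_2M; rewrite ler_pdivrMr // -natrM ler_nat mulnC.
have N_gt1 : (1 < N)%N by apply: leq_trans M_le_N; apply: leq_trans M_ge64.
have N8_le : (N ^ 8 <= 2 ^ l)%N by apply: (@expn_le_exp2_of_log2 R) => //; apply: ltnW.
have perm_gt0 : (0 < #|{perm 'I_N}|)%N by apply/card_gt0P; exists 1%g.
rewrite /prob_bad ler_pdivrMr ?ltr0n // mulrC ler_pdivlMr; last first.
  by rewrite exprn_gt0 // ltr0n ltnW.
by rewrite -natrX -natrM ler_nat card_bad_draw_mul_expn.
Qed.
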